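(* Let $M,N$ be weights of $\mathbb{R}^m,\mathbb{R}^n$, let $A\in\mathbb{R}^{m\times n}$ with $MA=AN$, and let $K\subseteq\mathbb{R}^n$ be a closed cone. If $$(A^{[\dagger]})^{[*]}\circ I\circ K^{[*]}\subseteq A\circ I\circ K,$$ then $$(A^{[*]}\circ A)^{[\dagger]}\circ K^{[*]}\subseteq K+\mathcal{N}(A\circ I).$$
   Context: A weight is a real symmetric matrix $W$ with $W^2=I$. $\mathbb{R}^m$ and $\mathbb{R}^n$ carry weights $M\in\mathbb{R}^{m\times m}$ and $N\in\mathbb{R}^{n\times n}$, respectively. The indefinite inner product on the space with weight $W$ is $[x,y]=\langle x,Wy\rangle$. Indefinite matrix product: if $B$ has $p$ columns and $C$ has $p$ rows (or is a vector in $\mathbb{R}^p$), $p\in\{m,n\}$, and $W$ is the weight of $\mathbb{R}^p$, then $B\circ C:=BWC$. $I$ denotes an identity matrix of the appropriate size. Indefinite adjoint of $B\in\mathbb{R}^{p\times q}$: $B^{[*]}:=W_qB^TW_p$, where $W_p,W_q$ are the weights of $\mathbb{R}^p,\mathbb{R}^q$. Indefinite Moore–Penrose inverse: for $B\in\mathbb{R}^{p\times q}$, $B^{[\dagger]}$ is the unique $X\in\mathbb{R}^{q\times p}$ such that - $B\circ X\circ B=B$, - $X\circ B\circ X=X$, - $(B\circ X)^{[*]}=B\circ X$, - $(X\circ B)^{[*]}=X\circ B$. It equals $W_qB^\dagger W_p$. Range and null space: for a matrix $B$ with $q$ columns, $\mathcal{R}(B)=\{B\circ x:x\in\mathbb{R}^q\}$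 and $\mathcal{N}(B)=\{x\in\mathbb{R}^q:B\circ x=0\}$. A cone is a nonempty set closed under addition and under multiplication by nonnegative scalars. For $S$ a subset of $\mathbb{R}^p$ with weight $W$, the dual is $S^{[*]}=\{x\in\mathbb{R}^p:[x,t]\ge0\ \forall t\in S\}$. For a matrix $B$ and a set $S$, $B\circ S=\{B\circ s:s\in S\}$. The sum of sets is the Minkowski sum. *)

From Stdlib Require Import Reals Lra ClassicalEpsilon FunctionalExtensionality
  PropExtensionality.
From HB Require Import structures.
From mathcomp Require Import all_boot all_order all_algebra.
Set Implicit Arguments. Unset Strict Implicit. Unset Printing Implicit Defensive.
Import Order.TTheory GRing.Theory Num.Theory.

Definition Reqb (x y : R) : bool := if Req_EM_T x y then true else false.
Lemma ReqbP : Equality.axiom Reqb.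
Proof. move=> x y; rewrite /Reqb; case: Req_EM_T => H; [exact: ReflectT|exact: ReflectF]. Qed.
HB.instance Definition _ := hasDecEq.Build R ReqbP.

Definition Rfind (P : pred R) (_ : nat) : option R :=
  match excluded_middle_informative (exists x, P x) with
  | left H => Some (proj1_sig (constructive_indefinite_description _ H))
  | right _ => None
  end.
Lemma Rfind_correct P n x : Rfind P n = Some x -> P x.
Proof.
rewrite /Rfind; case: excluded_middle_informative => // H [<-].
exact: proj2_sig (constructive_indefinite_description _ H).
Qed.
Lemma Rfind_complete (P : pred R) : (exists x, P x) -> exists n, Rfind P n.
Proof. move=> H; exists 0%N; rewrite /Rfind; case: excluded_middle_informative. by []. by []. Qed.
Lemma Rfind_ext (P Q : pred R) : P =1 Q -> Rfind P =1 Rfind Q.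
Proof. by move=> /functional_extensionality ->. Qed.
HB.instance Definition _ := hasChoice.Build R Rfind_correct Rfind_complete Rfind_ext.

Lemma R_addrA : forall x y z : R, Rplus x (Rplus y z) = Rplus (Rplus x y) z. Proof. move=> *; ring. Qed.
Lemma R_addrC : forall x y : R, Rplus x y = Rplus y x. Proof. move=> *; ring. Qed.
Lemma R_add0r : forall x : R, Rplus R0 x = x. Proof. move=> *; ring. Qed.
Lemma R_addNr : forall x : R, Rplus (Ropp x) x = R0. Proof. move=> *; ring. Qed.
HB.instance Definition _ := GRing.isZmodule.Build R R_addrA R_addrC R_add0r R_addNr.

Lemma R_mulrA : forall x y z : R, Rmult x (Rmult y z) = Rmult (Rmult x y) z. Proof. move=> *; ring. Qed.
Lemma R_mulrC : forall x y : R, Rmult x y = Rmult y x. Proof. move=> *; ring. Qed.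
Lemma R_mul1r : forall x : R, Rmult R1 x = x. Proof. move=> *; ring. Qed.
Lemma R_mulrDl : forall x y z : R, Rmult (x + y)%R z = Rplus (Rmult x z) (Rmult y z). Proof. move=> *; rewrite /GRing.add /=; ring. Qed.
Lemma R_oner_neq0 : R1 != (0 : R)%R. Proof. by apply/eqP; exact: R1_neq_R0. Qed.
HB.instance Definition _ := GRing.Zmodule_isComNzRing.Build R
  R_mulrA R_mulrC R_mul1r R_mulrDl R_oner_neq0.

Local Open Scope ring_scope.
Definition Rinvx (x : R) : R := if Reqb x R0 then R0 else Rinv x.
Lemma R_mulVf (x : R) : x != 0 -> Rinvx x * x = 1.
Proof.
move=> /eqP Hx; rewrite /Rinvx; case: ReqbP => // _.
exact: Rinv_l.
Qed.
Lemma R_invr0 : Rinvx 0 = 0.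
Proof. by rewrite /Rinvx; case: ReqbP. Qed.
HB.instance Definition _ := GRing.ComNzRing_isField.Build R R_mulVf R_invr0.

Definition Rleb (x y : R) : bool := if Rle_dec x y then true else false.
Definition Rltb (x y : R) : bool := if Rlt_dec x y then true else false.
Lemma RlebP x y : reflect (Rle x y) (Rleb x y).
Proof. rewrite /Rleb; case: Rle_dec => H; [exact: ReflectT|exact: ReflectF]. Qed.
Lemma RltbP x y : reflect (Rlt x y) (Rltb x y).
Proof. rewrite /Rltb; case: Rlt_dec => H; [exact: ReflectT|exact: ReflectF]. Qed.

Lemma R_le0_add (x y : R) : Rleb 0 x -> Rleb 0 y -> Rleb 0 (x + y).
Proof. move=> /RlebP ? /RlebP ?; apply/RlebP; rewrite /GRing.add /=; lra. Qed.
Lemma R_le0_mul (x y : R) : Rleb 0 x -> Rleb 0 y -> Rleb 0 (x * y).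
Proof. move=> /RlebP ? /RlebP ?; apply/RlebP; rewrite /GRing.mul /=; nra. Qed.
Lemma R_le0_anti (x : R) : Rleb 0 x -> Rleb x 0 -> x = 0.
Proof. move=> /RlebP ? /RlebP ?; rewrite /GRing.zero /=; lra. Qed.
Lemma R_sub_ge0 (x y : R) : Rleb 0 (y - x) = Rleb x y.
Proof.
apply/idP/idP => /RlebP H; apply/RlebP; move: H;
rewrite /GRing.add /GRing.opp /=; lra.
Qed.
Lemma R_le0_total (x : R) : Rleb 0 x || Rleb x 0.
Proof. case: (RlebP 0 x) => //= H; apply/RlebP; rewrite /GRing.zero /=; lra. Qed.
Lemma R_normN (x : R) : Rabs (- x) = Rabs x.
Proof. exact: Rabs_Ropp. Qed.
Lemma R_ge0_norm (x : R) : Rleb 0 x -> Rabs x = x.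
Proof. by move=> /RlebP H; apply: Rabs_right; apply: Rle_ge. Qed.
Lemma R_lt_def (x y : R) : Rltb x y = (y != x) && Rleb x y.
Proof.
apply/idP/andP => [/RltbP H|[/eqP H1 /RlebP H2]].
  by split; [apply/eqP => E; subst; lra | apply/RlebP; lra].
by apply/RltbP; lra.
Qed.
HB.instance Definition _ := Num.IntegralDomain_isLeReal.Build R
  R_le0_add R_le0_mul R_le0_anti R_sub_ge0 R_le0_total R_normN R_ge0_norm R_lt_def.

Definition is_weight (p : nat) (W : 'M[R]_p) : Prop :=
  W^T = W /\ W *m W = 1%:M.

Definition iprod (q p r : nat) (W : 'M[R]_p) (B : 'M[R]_(q, p)) (C : 'M[R]_(p, r))
  : 'M[R]_(q, r) := B *m W *m C.

Definition iadj (p q : nat) (Wp : 'M[R]_p) (Wq : 'M[R]_q) (B : 'M[R]_(p, q))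
  : 'M[R]_(q, p) := Wq *m B^T *m Wp.

Definition is_iMP (p q : nat) (Wp : 'M[R]_p) (Wq : 'M[R]_q)
  (B : 'M[R]_(p, q)) (X : 'M[R]_(q, p)) : Prop :=
  [/\ iprod Wp (iprod Wq B X) B = B,
      iprod Wq (iprod Wp X B) X = X,
      iadj Wp Wp (iprod Wq B X) = iprod Wq B X
    & iadj Wq Wq (iprod Wp X B) = iprod Wp X B].

Definition vset (p : nat) := 'cV[R]_p -> Prop.

Definition iip (p : nat) (W : 'M[R]_p) (x y : 'cV[R]_p) : R :=
  (x^T *m W *m y) 0 0.

Definition is_cone (p : nat) (S : vset p) : Prop :=
  (exists x, S x) /\
  (forall x y, S x -> S y -> S (x + y)) /\
  (forall (a : R) x, 0 <= a -> S x -> S (a *: x)).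

(* Topological closedness in R^p (Euclidean topology; equivalently via the
   max norm): every point adherent to S belongs to S. *)
Definition is_closed (p : nat) (S : vset p) : Prop :=
  forall x : 'cV[R]_p,
    (forall eps : R, 0 < eps ->
       exists2 s, S s & forall i, `|x i 0 - s i 0| < eps) ->
    S x.

Definition idual (p : nat) (W : 'M[R]_p) (S : vset p) : vset p :=
  fun x => forall t, S t -> 0 <= iip W x t.

Definition iimage (q p : nat) (W : 'M[R]_p) (B : 'M[R]_(q, p)) (S : vset p) : vset q :=
  fun y => exists2 s, S s & y = iprod W B s.

Definition inull (q p : nat) (W : 'M[R]_p) (B : 'M[R]_(q, p)) : vset p :=
  fun x => iprod W B x = 0.

Definition vsum (p : nat) (S T : vset p) : vset p :=
  fun x => exists s t, [/\ S s, T t & x = s + t].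

Definition vsubset (p : nat) (S T : vset p) : Prop := forall x, S x -> T x.

(* Since [M A = A N], the indefinite Moore-Penrose inverse turns into the
   ordinary one after conjugation by the weights: [N A^[dagger] M] is the
   Moore-Penrose inverse [P] of [A], and [(A^[*] o A)^[dagger]] becomes a
   least-squares inverse [Q] of the Gram matrix [A^T A].  For any such [Q] one
   has [A Q = P^T], which here reads [A o (A^[*] o A)^[dagger] = (A^[dagger])^[*]]
   as maps on vectors.  So for [s] in [K^[*]] the hypothesis provides [k] in [K]
   with [A k = A (A^[*] o A)^[dagger] o s], and [(A^[*] o A)^[dagger] o s - k]
   lies in the null space of [A]. *)
From Stdlib Require Import Reals.
From mathcomp Require Import all_boot all_order all_algebra.
Set Implicit Arguments. Unset Strict Implicit. Unset Printing Implicit Defensive.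
Local Open Scope ring_scope.
Import GRing.Theory.

Section PenroseInverses.
Variable F : comPzRingType.

Definition mp_inverse (p q : nat) (A : 'M[F]_(p, q)) (P : 'M[F]_(q, p)) : Prop :=
  [/\ A *m P *m A = A, P *m A *m P = P,
      (A *m P)^T = A *m P & (P *m A)^T = P *m A].

(* A {1,3}-inverse: [Q y] is a least-squares solution of [G x = y]. *)
Definition lsq_inverse (p q : nat) (G : 'M[F]_(p, q)) (Q : 'M[F]_(q, p)) : Prop :=
  G *m Q *m G = G /\ (G *m Q)^T = G *m Q.

Lemma lsq_inverse_mulmxr (p q : nat) (G : 'M[F]_(p, q)) (Q : 'M[F]_(q, p))
    (U : 'M[F]_q) :
  U^T = U -> U *m U = 1%:M -> lsq_inverse G Q -> lsq_inverse (G *m U) (U *m Q).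
Proof.
move=> UT UU [GQG GQT]; have GUUQ : G *m U *m (U *m Q) = G *m Q.
  by rewrite mulmxA -(mulmxA G) UU mulmx1.
by split; rewrite GUUQ // mulmxA GQG.
Qed.

Lemma mulmx_lsq_inverse_gram (p q : nat) (A : 'M[F]_(p, q)) (P : 'M[F]_(q, p))
    (Q : 'M[F]_q) :
  mp_inverse A P -> lsq_inverse (A^T *m A) Q -> A *m Q = P^T.
Proof.
move=> [APA PAP APT PAT] [GQG GQT].
have AT_GP : A^T = A^T *m A *m P by rewrite -{1}APA trmx_mul APT mulmxA.
have GQ_AT : A^T *m A *m Q *m A^T = A^T by rewrite {2}AT_GP mulmxA GQG -AT_GP.
have A_GQ : A *m (A^T *m A *m Q) = A.
  by have := congr1 trmx GQ_AT; rewrite trmx_mul !trmxK GQT.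
have PT_PA : P^T = P^T *m P *m A by rewrite -{1}PAP trmx_mul PAT mulmxA.
have PPAAT : P^T *m P *m A *m A^T = A *m P.
  by rewrite -(mulmxA P^T) -PAT trmx_mul mulmxA -mulmxA -!(trmx_mul A P) APT
    mulmxA APA.
by rewrite PT_PA -{2}A_GQ !mulmxA PPAAT APA.
Qed.

End PenroseInverses.

Lemma mulmx_weightK (p q : nat) (W : 'M[R]_p) (X : 'M[R]_(q, p)) :
  is_weight W -> X *m W *m W = X.
Proof. by move=> [_ WW]; rewrite -mulmxA WW mulmx1. Qed.

Lemma iprod_mx1 (p q : nat) (W : 'M[R]_p) (X : 'M[R]_(q, p)) :
  iprod W X 1%:M = X *m W.
Proof. by rewrite /iprod mulmx1. Qed.

Lemma mp_inverse_iMP (p q : nat) (Wp : 'M[R]_p) (Wq : 'M[R]_q)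
    (B : 'M[R]_(p, q)) (X : 'M[R]_(q, p)) :
  is_weight Wp -> is_weight Wq -> is_iMP Wp Wq B X ->
  mp_inverse B (Wq *m X *m Wp).
Proof.
move=> [WpT WpW] [WqT WqW]; rewrite /is_iMP /iprod /iadj.
move=> [BXB XBX /(congr1 (mulmx^~ Wp)) BXT /(congr1 (mulmx Wq)) XBT].
rewrite mulmx_weightK // in BXT; rewrite !mulmxA WqW mul1mx in XBT.
rewrite !trmx_mul WpT WqT !mulmxA in BXT XBT.
split; rewrite ?trmx_mul ?WpT ?WqT !mulmxA //.
by rewrite -[in RHS]XBX !mulmxA.
Qed.

Lemma iprod_iadj_gram (m n : nat) (M : 'M[R]_m) (N : 'M[R]_n) (A : 'M[R]_(m, n)) :
  is_weight M -> is_weight N -> M *m A = A *m N ->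
  iprod M (iadj M N A) A = A^T *m A *m N.
Proof.
move=> [MT MM] [NT _] MA.
have NAT : N *m A^T = A^T *m M by rewrite -NT -trmx_mul -MA trmx_mul MT.
by rewrite /iprod /iadj -(mulmxA _ M M) MM mulmx1 NAT -mulmxA MA mulmxA.
Qed.

Lemma mulmx_iMP_gram (m n : nat) (M : 'M[R]_m) (N : 'M[R]_n) (A : 'M[R]_(m, n))
    (Adag : 'M[R]_(n, m)) (B : 'M[R]_n) :
  is_weight M -> is_weight N -> M *m A = A *m N ->
  is_iMP M N A Adag -> is_iMP N N (iprod M (iadj M N A) A) B ->
  A *m B *m N = iadj N M Adag.
Proof.
move=> wM wN MA /(mp_inverse_iMP wM wN) mpA.
rewrite iprod_iadj_gram // => /(mp_inverse_iMP wN wN) [GBG _ GBT _].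
have lsqG : lsq_inverse (A^T *m A) (B *m N).
  have := lsq_inverse_mulmxr wN.1 wN.2 (conj GBG GBT).
  by rewrite !mulmxA !(mulmx_weightK _ wN) wN.2 mul1mx.
rewrite -mulmxA (mulmx_lsq_inverse_gram mpA lsqG) !trmx_mul wM.1 wN.1.
by rewrite /iadj !mulmxA.
Qed.

Theorem lemma3p12 (m n : nat) (M : 'M[R]_m) (N : 'M[R]_n) (A : 'M[R]_(m, n))
  (K : vset n)
  (Adag : 'M[R]_(n, m)) (B : 'M[R]_n) :
  is_weight M -> is_weight N -> M *m A = A *m N ->
  is_cone K -> is_closed K ->
  (* Adag = A^[dagger] *)
  is_iMP M N A Adag ->
  (* B = (A^[*] o A)^[dagger] *)
  is_iMP N N (iprod M (iadj M N A) A) B ->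
  vsubset (iimage N (iprod N (iadj N M Adag) (1%:M : 'M[R]_n)) (idual N K))
          (iimage N (iprod N A (1%:M : 'M[R]_n)) K) ->
  vsubset (iimage N B (idual N K))
          (vsum K (inull N (iprod N A (1%:M : 'M[R]_n)))).
Proof.
move=> wM wN MA _ _ iMPA iMPG sub _ [s Ks ->].
have ABN := mulmx_iMP_gram wM wN MA iMPA iMPG.
have [k Kk Ak] := sub _ (ex_intro2 _ _ s Ks erefl).
rewrite !iprod_mx1 /iprod !(mulmx_weightK _ wN) in Ak.
exists k, (B *m N *m s - k); split => //; last by rewrite addrC subrK.
rewrite /inull iprod_mx1 /iprod (mulmx_weightK _ wN) mulmxBr !mulmxA ABN.
by apply/eqP; rewrite Ak subr_eq0.
Qed.
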